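(* For every natural number $n \geq 2$, there exists a regular graph $G_n$ with $\chi(G_n) = n$ and $\chi_2(G_n) = 2\chi(G_n)$.
   Context: All graphs are finite and simple. A proper $k$-colouring of a graph $G$ is a map $c\colon V(G)\to[k]$ with $c(u)\neq c(v)$ for every edge $uv$; $\chi(G)$ is the chromatic number. For an integer $r\ge 1$, an $r$-dynamic $k$-colouring of $G$ is a proper $k$-colouring $c$ such that for every vertex $v$, the set $c(N(v))$ of colours used on the neighbourhood $N(v)$ has size at least $\min\{r, d(v)\}$, where $d(v)$ is the degree of $v$. The $r$-dynamic chromatic number $\chi_r(G)$ is the least $k$ such that $G$ has an $r$-dynamic $k$-colouring. In particular $\chi_2(G)$ (the dynamic chromatic number) is the least number of colours in a proper colouring in which the neighbourhood of every vertex of degree at least $2$ is not monochromatic. *)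

From mathcomp Require Import all_boot.
Unset Printing Implicit Defensive.

Definition simple_graph {T : finType} (e : rel T) : Prop :=
  irreflexive e /\ symmetric e.

Definition nbhd {T : finType} (e : rel T) (v : T) : {set T} := [set u | e v u].

Definition deg {T : finType} (e : rel T) (v : T) : nat := #|nbhd e v|.

Definition regular {T : finType} (e : rel T) : Prop :=
  exists d, forall v, deg e v = d.

Definition proper_colouring {T : finType} (e : rel T) (k : nat) (c : T -> 'I_k) : Prop :=
  forall u v, e u v -> c u != c v.

Definition dynamic_colouring {T : finType} (e : rel T) (r k : nat) (c : T -> 'I_k) : Prop :=
  proper_colouring e k c /\
  (forall v, minn r (deg e v) <= #|c @: nbhd e v|).

Definition chromatic_number_is {T : finType} (e : rel T) (n : nat) : Prop :=
  (exists c, proper_colouring e n c) /\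
  (forall k (c : T -> 'I_k), proper_colouring e k c -> n <= k).

Definition dyn_chromatic_number_is {T : finType} (e : rel T) (r n : nat) : Prop :=
  (exists c, dynamic_colouring e r n c) /\
  (forall k (c : T -> 'I_k), dynamic_colouring e r k c -> n <= k).

(* Take n columns and a large set R of rows.  For each row r and column i put
   a part of 2 phi core vertices, and join two core vertices when they lie in
   the same row and in different columns: every row is a complete n-partite
   graph.  For each column j and each n-set A of rows, add two outer vertices
   adjacent to all core vertices of column j in the rows of A.  With phi the
   number of n-sets of rows through a fixed row, the graph is regular of
   degree 2n phi.  Colouring core vertices by their column gives
   chi = n; splitting each part into two halves with distinct colours gives a
   2-dynamic colouring with 2n colours.  Conversely, a proper colouring with
   fewer than 2n colours is constant on some part of every row; as R is large,
   n rows share the column and the colour of that part, and the outer vertex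
   over these n rows sees a single colour. *)
From mathcomp Require Import all_boot zify.
Set Implicit Arguments. Unset Strict Implicit. Unset Printing Implicit Defensive.

Lemma exists_subset_card (T : finType) (B : {set T}) k :
  k <= #|B| -> exists2 A : {set T}, A \subset B & #|A| = k.
Proof.
case/card_geqP => s [uniq_s size_s sub_sB]; exists [set x in s].
  by apply/subsetP => x; rewrite inE; apply: sub_sB.
by rewrite cardsE (card_uniqP uniq_s).
Qed.

Lemma pigeonhole (I J : finType) (h : I -> J) N :
  #|J| * N < #|I| -> exists y, N < #|[set x | h x == y]|.
Proof.
move=> lt_JN_I.
suff /existsP[y] : [exists y, N < #|[set x | h x == y]|] by exists y.
apply: contraLR lt_JN_I; rewrite negb_exists -leqNgt => /forallP small_fibres.
rewrite -sum1_card (partition_big h predT) //= -sum_nat_const.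
by apply: leq_sum => y _; rewrite sum1dep_card leqNgt; apply: small_fibres.
Qed.

Definition ksets (T : finType) (k : nat) := {A : {set T} | #|A| == k}.

Lemma card_ksets_mem (T : finType) k (x : T) :
  0 < k -> #|[set A : ksets T k | x \in val A]| = 'C(#|T|.-1, k.-1).
Proof.
move=> k_gt0; rewrite -(card_imset _ val_inj) -(cardsC1 x) -cards_draws.
have -> : val @: [set A : ksets T k | x \in val A] =
          [set A : {set T} | #|A| == k & x \in A].
  apply/setP => A; rewrite inE; apply/imsetP/andP => [[B xB ->]|[kA xA]].
    by rewrite inE in xB; rewrite (valP B).
  by exists (Sub A kA); rewrite ?inE.
have D1_inj : {in [set A : {set T} | #|A| == k & x \in A] &,
               injective (fun A => A :\ x)}.
  move=> A B; rewrite !inE => /andP[_ xA] /andP[_ xB] eq_AB.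
  by rewrite -(setD1K xA) eq_AB setD1K.
rewrite -(card_in_imset D1_inj); apply: eq_card => B; rewrite inE.
apply/imsetP/andP => [[A]|[sBx kB]].
  rewrite inE => /andP[kA xA] ->.
  split; first by apply/subsetP => y; rewrite !inE => /andP[].
  by rewrite -(eqP kA) (cardsD1 x A) xA.
have xB : x \notin B by apply/negP => /(subsetP sBx); rewrite !inE eqxx.
exists (x |: B); last by rewrite setU1K.
by rewrite inE cardsU1 xB (eqP kB) add1n prednK // setU11 eqxx.
Qed.

Lemma cards_sumType (A B : finType) (P : pred (A + B)) :
  #|[set u | P u]| = #|[set a | P (inl a)]| + #|[set b | P (inr b)]|.
Proof. by rewrite -!sum1dep_card big_sumType. Qed.

Lemma ordS_neq n (i : 'I_n) : 1 < n -> ordS i != i.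
Proof.
move=> n_gt1; rewrite -val_eqE /=.
have [lt_in | le_ni] := ltnP i.+1 n; first by rewrite modn_small ?gtn_eqF.
have i_eq : i.+1 = n by apply/eqP; rewrite eqn_leq le_ni ltn_ord.
by rewrite i_eq modnn eq_sym -lt0n -ltnS i_eq.
Qed.

Fact colour_pair_subproof n (b : bool) (i : 'I_n) : b * n + i < 2 * n.
Proof. by have := ltn_ord i; case: b; lia. Qed.

Definition colour_pair n (b : bool) (i : 'I_n) : 'I_(2 * n) :=
  Ordinal (colour_pair_subproof b i).

Lemma colour_pair_eq n (b b' : bool) (i j : 'I_n) :
  (colour_pair b i == colour_pair b' j) = (b == b') && (i == j).
Proof.
rewrite -val_eqE /= -val_eqE /=.
by have := ltn_ord i; have := ltn_ord j; case: b; case: b'; lia.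
Qed.

Section Colourings.

Variables (T : finType) (e : rel T).

Lemma proper_colouring_clique n k (c : T -> 'I_k) (f : 'I_n -> T) :
  (forall i j, i != j -> e (f i) (f j)) -> proper_colouring e k c -> n <= k.
Proof.
move=> f_clique c_proper; rewrite -[n]card_ord -[k]card_ord.
apply: (@leq_card _ _ (c \o f)) => i j /eqP; apply: contraTeq => ne_ij.
exact: c_proper (f_clique _ _ ne_ij).
Qed.

Lemma proper_colouring_multipartite (X : finType) n k (c : T -> 'I_k)
    (f : 'I_n -> X -> T) :
  (forall i j x y, i != j -> e (f i x) (f j y)) -> proper_colouring e k c ->
  k < 2 * n -> exists i, forall x y, c (f i x) = c (f i y).
Proof.
move=> f_multipartite c_proper lt_k_2n.
suff /existsP[i /forallP c_const] :
    [exists i, [forall x, [forall y, c (f i x) == c (f i y)]]].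
  by exists i => x y; apply/eqP; have /forallP := c_const x; apply.
apply: contraLR lt_k_2n; rewrite -leqNgt negb_exists => /forallP non_const.
have /fin_all_exists[p c_p] i : exists p : X * X, c (f i p.1) != c (f i p.2).
  by have /forallPn[x /forallPn[y ne_xy]] := non_const i; exists (x, y).
pose g (ib : 'I_n * bool) :=
  c (f ib.1 (if ib.2 then (p ib.1).1 else (p ib.1).2)).
have g_inj : injective g.
  move=> [i b] [j b'] /eqP; rewrite /g /=; have [<-|ne_ij] := eqVneq i j.
    by case: b; case: b' => //; rewrite ?(negPf (c_p i)) // eq_sym (negPf (c_p i)).
  by rewrite (negPf (c_proper _ _ (f_multipartite _ _ _ _ ne_ij))).
by have := leq_card g g_inj; rewrite card_prod card_bool mulnC !card_ord.
Qed.

End Colourings.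

Section Construction.

Variables (n : nat) (R : finType).
Hypotheses (n_gt1 : 1 < n) (R_large : 2 * n ^ 3 < #|R|).

Local Notation phi := 'C(#|R|.-1, n.-1).

Definition core := (R * 'I_n * (bool * 'I_phi))%type.
Definition outer := ('I_n * ksets R n * bool)%type.
Definition vertex : finType := (core + outer)%type.

Definition adj (u v : vertex) : bool :=
  match u, v with
  | inl (r, i, _), inl (r', j, _) => (r == r') && (i != j)
  | inl (r, i, _), inr (j, A, _) | inr (j, A, _), inl (r, i, _) =>
      (i == j) && (r \in val A)
  | inr _, inr _ => false
  end.

Lemma adj_simple : simple_graph adj.
Proof.
split; first by case=> [[[r i] x]|[[j A] b]] //=; rewrite !eqxx.
move=> [[[r i] x]|[[j A] b]] [[[r' i'] x']|[[j' A'] b']] //=.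
by rewrite eq_sym (eq_sym i).
Qed.

Lemma phi_gt0 : 0 < phi.
Proof. rewrite bin_gt0; nia. Qed.

Lemma deg_adj v : deg adj v = n * (2 * phi).
Proof.
rewrite /deg /nbhd cards_sumType; case: v => [[[r i] x]|[[j A] b]] /=.
- have -> : [set u : core | adj (inl (r, i, x)) (inl u)] =
            setX (setX [set r] [set~ i]) setT.
    by apply/setP => -[[r' i'] x']; rewrite !inE /= andbT eq_sym (eq_sym i').
  have -> : [set u : outer | adj (inl (r, i, x)) (inr u)] =
            setX (setX [set i] [set A : ksets R n | r \in val A]) setT.
    by apply/setP => -[[j A] b]; rewrite !inE /= andbT eq_sym.
  rewrite !cardsX !cards1 cardsC1 card_ksets_mem; last by lia.
  rewrite !cardsT card_prod !card_bool !card_ord; set C := 'C(_, _); nia.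
- have -> : [set u : core | adj (inr (j, A, b)) (inl u)] =
            setX (setX (val A) [set j]) setT.
    by apply/setP => -[[r i] x]; rewrite !inE /= andbT andbC.
  have -> : [set u : outer | adj (inr (j, A, b)) (inr u)] = set0.
    by apply/setP => -[[j' A'] b']; rewrite !inE.
  rewrite !cardsX cards1 cards0 cardsT card_prod card_bool card_ord (eqP (valP A)).
  by rewrite muln1 addn0.
Qed.

Lemma adj_regular : regular adj.
Proof. by exists (n * (2 * phi)); apply: deg_adj. Qed.

Let y0 : 'I_phi := Ordinal phi_gt0.

Definition column_colouring (v : vertex) : 'I_n :=
  match v with inl (_, i, _) => i | inr (j, _, _) => ordS j end.

Lemma column_colouring_proper : proper_colouring adj n column_colouring.
Proof.
move=> [[[r i] x]|[[j A] b]] [[[r' i'] x']|[[j' A'] b']] //=.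
- by case/andP.
- by case/andP => /eqP <- _; rewrite eq_sym ordS_neq.
- by case/andP => /eqP -> _; rewrite ordS_neq.
Qed.

Lemma adj_chromatic : chromatic_number_is adj n.
Proof.
split; first by exists column_colouring; apply: column_colouring_proper.
have /card_gt0P[r0 _] : 0 < #|R| by nia.
move=> k c.
apply: (proper_colouring_clique (f := fun i => inl (r0, i, (false, y0)))).
by move=> i j ne_ij /=; rewrite eqxx.
Qed.

Definition half_colouring (v : vertex) : 'I_(2 * n) :=
  match v with
  | inl (_, i, (b, _)) => colour_pair b i
  | inr (j, _, _) => colour_pair false (ordS j)
  end.

Lemma half_colouring_dynamic : dynamic_colouring adj 2 (2 * n) half_colouring.
Proof.
split.
  move=> [[[r i] [b x]]|[[j A] b]] [[[r' i'] [b' x']]|[[j' A'] b'']] //=.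
  - by case/andP => _ ne_ii'; rewrite colour_pair_eq negb_and ne_ii' orbT.
  - case/andP => /eqP <- _.
    by rewrite colour_pair_eq (eq_sym i) (negPf (ordS_neq i n_gt1)) andbF.
  - case/andP => /eqP -> _.
    by rewrite colour_pair_eq (negPf (ordS_neq j n_gt1)) andbF.
move=> v; apply: leq_trans (geq_minl _ _) _.
have both_halves r j : adj v (inl (r, j, (false, y0))) ->
    adj v (inl (r, j, (true, y0))) -> 1 < #|half_colouring @: nbhd adj v|.
  move=> adj_false adj_true; apply/card_gt1P.
  exists (colour_pair false j), (colour_pair true j); split.
  - by apply/imsetP; exists (inl (r, j, (false, y0))); rewrite ?inE.
  - by apply/imsetP; exists (inl (r, j, (true, y0))); rewrite ?inE.
  - by rewrite colour_pair_eq.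
case: v both_halves => [[[r i] x]|[[j A] b]] both_halves.
  by apply: (both_halves r (ordS i)) => /=; rewrite eqxx eq_sym ordS_neq.
have /card_gt0P[r rA] : 0 < #|val A| by rewrite (eqP (valP A)); lia.
by apply: (both_halves r j) => /=; rewrite eqxx rA.
Qed.

Lemma dynamic_colouring_lb k (c : vertex -> 'I_k) :
  dynamic_colouring adj 2 k c -> 2 * n <= k.
Proof.
case=> c_proper c_dyn; rewrite leqNgt; apply/negP => lt_k_2n.
have /fin_all_exists[col col_const] r :
    exists i, forall x y, c (inl (r, i, x)) = c (inl (r, i, y)).
  apply: (proper_colouring_multipartite (f := fun i x => inl (r, i, x)))
    c_proper lt_k_2n.
  by move=> i j x y ne_ij /=; rewrite eqxx.
pose h r := (col r, c (inl (r, col r, (false, y0)))).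
have [[j a] large_fibre] : exists y, n.-1 < #|[set r | h r == y]|.
  by apply: pigeonhole; rewrite card_prod !card_ord; nia.
have [A sub_A /eqP card_A] :=
  exists_subset_card (leq_trans (leqSpred n) large_fibre).
pose v : vertex := inr (j, Sub A card_A, false).
have mono_v : c @: nbhd adj v \subset [set a].
  apply/subsetP => _ /imsetP[u u_nbhd ->]; case: u u_nbhd => [[[r i] x]|u];
    rewrite /nbhd inE //= => /andP[/eqP -> rA].
  have := subsetP sub_A r rA; rewrite !inE => /eqP[<- <-].
  by rewrite (col_const r x (false, y0)).
have := c_dyn v; rewrite deg_adj (minn_idPl _); last by have := phi_gt0; nia.
by move/leq_trans/(_ (subset_leq_card mono_v)); rewrite cards1.
Qed.

Lemma adj_dyn_chromatic : dyn_chromatic_number_is adj 2 (2 * n).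
Proof.
split; first by exists half_colouring; apply: half_colouring_dynamic.
exact: dynamic_colouring_lb.
Qed.

End Construction.

Theorem theorem1p2 :
  forall n : nat, 2 <= n ->
  exists (T : finType) (e : rel T),
    [/\ simple_graph e, regular e,
        chromatic_number_is e n &
        dyn_chromatic_number_is e 2 (2 * n)].
Proof.
move=> n n_gt1; pose R := 'I_(2 * n ^ 3).+1.
have R_large : 2 * n ^ 3 < #|R| by rewrite card_ord.
exists (vertex n R), (@adj n R); split.
- exact: adj_simple.
- exact: adj_regular.
- exact: adj_chromatic.
- exact: adj_dyn_chromatic.
Qed.
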